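(* Let $H$ be a complex Hilbert space and let $f(z)=\sum_{n=0}^{\infty}a_nz^n$ be a power series with complex coefficients, convergent on the open disk $D(0,R)\subset\mathbb{C}$, $R>0$, and let $f_a(z):=\sum_{n=0}^{\infty}|a_n|z^n$. Let $A,B\in B(H)$ commute and satisfy $\|A\|^2<R$, $\|B\|^2<R$. Then both of the following chains of inequalities hold: \[ r\left[f(AB)\right]\leq \frac12 f_a(\|AB\|)+\frac12 f_a\left(\|A\|^{1/2}\|B\|^{1/2}\|AB\|^{1/2}\right) \leq \frac12 f_a(\|AB\|)+\frac12 f_a^{1/2}(\|A\|\|B\|)f_a^{1/2}(\|AB\|), \] and \[ r\left[f(AB)\right]\leq \frac12 f_a(\|AB\|)+\frac12\min\left\{f_a\left(\|A\|\|B^2\|^{1/2}\right),\ f_a\left(\|A^2\|^{1/2}\|B\|\right)\right\} \] \[ \leq \frac12 f_a(\|AB\|)+\frac12\min\left\{f_a^{1/2}(\|A\|^2)f_a^{1/2}(\|B^2\|),\ f_a^{1/2}(\|A^2\|)f_a^{1/2}(\|B\|^2)\right\}. \]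
   Context: $B(H)$ denotes the algebra of bounded linear operators on $H$, $\|\cdot\|$ the operator norm, and $r(T)$ the spectral radius of $T$. For an operator $T$ with $\|T\|<R$, $f(T):=\sum_{n=0}^\infty a_nT^n$. *)

From HB Require Import structures.
From mathcomp Require Import all_boot all_order all_algebra.
From mathcomp Require Import all_classical all_reals all_analysis.
From mathcomp Require Import complex.
Export Order.TTheory GRing.Theory Num.Theory.
Export numFieldNormedType.Exports.

Set Implicit Arguments.
Unset Strict Implicit.
Unset Printing Implicit Defensive.

Local Open Scope ring_scope.
Local Open Scope classical_set_scope.

(* The field of complex numbers, seen as a numClosedFieldType (this makes the
   canonical topology / normed structure of numFieldNormedType available). *)
Definition C (R : realType) : numClosedFieldType := R[i].

(* The (real) norm of a vector of a normed space over C = R[i]; the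
   library norm `|x| is valued in R[i] (a nonnegative real complex number),
   we take its real part. *)
Definition rnorm {R : realType} {V : normedModType (C R)} (x : V) : R :=
  complex.Re `|x|.

Definition cmod {R : realType} (z : C R) : R := complex.Re `|z|.

(* (ip) is an inner product on H inducing the norm of H: together with the
   completeness of H, this makes H a complex Hilbert space. *)
Definition is_inner_product {R : realType} {H : completeNormedModType (C R)}
  (ip : H -> H -> C R) : Prop :=
  [/\ (forall x y z, ip (x + y) z = ip x z + ip y z),
      (forall (c : C R) x y, ip (c *: x) y = c * ip x y),
      (forall x y, ip y x = (ip x y)^*) &
      (forall x, ip x x = `|x| ^+ 2)].

Definition bounded_op {R : realType} {H : completeNormedModType (C R)}
  (T : H -> H) : Prop :=
  [/\ (forall x y, T (x + y) = T x + T y),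
      (forall (c : C R) x, T (c *: x) = c *: T x) &
      exists M : R, forall x, rnorm (T x) <= M * rnorm x].

Definition opnorm {R : realType} {H : completeNormedModType (C R)}
  (T : H -> H) : R :=
  sup [set rnorm (T x) | x in [set x : H | rnorm x <= 1]].

Definition spectrum {R : realType} {H : completeNormedModType (C R)}
  (T : H -> H) : set (C R) :=
  [set l | ~ exists S : H -> H,
      [/\ bounded_op S,
          (forall x, S (T x - l *: x) = x) &
          (forall x, T (S x) - l *: S x = x)]].

Definition spec_radius {R : realType} {H : completeNormedModType (C R)}
  (T : H -> H) : R :=
  sup [set cmod l | l in spectrum T].

(* f(T) = sum_n a_n T^n (the series converges in operator norm when
   ||T|| < R; we define the operator through the pointwise limit). *)
Definition op_series {R : realType} {H : completeNormedModType (C R)}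
  (a : nat -> C R) (T : H -> H) : H -> H :=
  fun x => limn (series (fun n => a n *: iter n T x)).

Definition abs_series {R : realType} (a : nat -> C R) (t : R) : R :=
  limn (series (fun n => cmod (a n) * t ^+ n)).

From HB Require Import structures.
From mathcomp Require Import all_boot all_order all_algebra.
From mathcomp Require Import all_classical all_reals all_analysis.
From mathcomp Require Import complex.
From mathcomp Require Import ring lra.
Import Order.TTheory GRing.Theory Num.Theory.
Import numFieldNormedType.Exports.
Local Open Scope complex_scope.
Local Open Scope ring_scope.
Local Open Scope classical_set_scope.

(* If the powers of P satisfy |P^j x| <= c t^j |x|, the norm
   |x|_t := sup_j |P^j x| / t^j is equivalent to the original one and gives
   |f(P)|_t <= f_a(t), so the Neumann series puts the spectrum of f(P) in the
   disk of radius f_a(t).  As f_a is convex, hence right continuous, this yields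
   r(f(P)) <= f_a(s) as soon as such bounds hold for every t > s.  For P = AB
   they hold with s = |AB|, and, since (AB)^j = A^j B^j and |B^2j| <= |B^2|^j,
   also with s = |A| |B^2|^(1/2) and with s = |A^2|^(1/2) |B|.  The remaining
   inequalities follow from the monotonicity of f_a,
   |AB| <= |A|^(1/2) |B|^(1/2) |AB|^(1/2) <= |A| |B|, and the Cauchy-Schwarz
   inequality f_a(uv)^2 <= f_a(u^2) f_a(v^2). *)

Lemma complex_ge0E {R : realType} (w : C R) : 0 <= w -> w = (complex.Re w)%:C.
Proof. by move=> w0; rewrite [LHS]complexE (ger0_Im w0) mulr0 addr0. Qed.

Section ComplexModulus.
Context {R : realType}.
Implicit Types (z w : C R) (r : R).

Lemma cmodE z : `|z| = (cmod z)%:C.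
Proof. exact: complex_ge0E. Qed.

Lemma cmod_ge0 z : 0 <= cmod z.
Proof. by rewrite -ler0c -cmodE. Qed.

Lemma cmodM z w : cmod (z * w) = cmod z * cmod w.
Proof. by apply: complexI; rewrite -cmodE normrM !cmodE -rmorphM. Qed.

Lemma cmod_real r : 0 <= r -> cmod (r%:C : C R) = r.
Proof. by move=> r0; apply: complexI; rewrite -cmodE ger0_norm // ler0c. Qed.

Lemma cmodV z : cmod z^-1 = (cmod z)^-1.
Proof. by apply: complexI; rewrite -cmodE normfV cmodE fmorphV. Qed.

Lemma cmodX z n : cmod (z ^+ n) = cmod z ^+ n.
Proof. by elim: n => [|n IH]; rewrite ?expr0 ?cmod_real // !exprS cmodM IH. Qed.

Lemma cvg_series_cmod_bounded (u : nat -> C R) :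
  cvgn (series u) -> exists M : R, forall n, cmod (u n) <= M.
Proof.
move=> /cvg_series_cvg_0 /cvgP /cvg_seq_bounded [M [Mreal hM]].
have M1_ge0 : 0 <= `|M| + 1 by rewrite addr_ge0.
exists (complex.Re (`|M| + 1)) => n.
have M_lt : M < `|M| + 1 by rewrite (le_lt_trans (real_ler_norm Mreal)) ?ltrDl.
by have := hM _ M_lt n I; rewrite /= (complex_ge0E _ M1_ge0) cmodE lecR.
Qed.

End ComplexModulus.

Lemma cvg_series_lincomb {R : realType} {f g : nat -> R} (k l : R) :
  cvgn (series f) -> cvgn (series g) ->
  series (fun n => k * f n + l * g n) @ \oo --> k * limn (series f) + l * limn (series g).
Proof.
move=> cf cg; have -> : series (fun n => k * f n + l * g n) =
    (fun n => k * series f n + l * series g n).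
  by apply: funext => n; rewrite /series /= big_split /= !mulr_sumr.
by apply: cvgD; apply: cvgM; [exact: cvg_cst | exact: cf | exact: cvg_cst | exact: cg].
Qed.

Lemma le_sqrtM_of_amgm {R : realType} (z x y : R) : 0 <= x -> 0 <= y ->
  (forall l, 0 < l -> z <= (l * x + y / l) / 2) ->
  z <= Num.sqrt x * Num.sqrt y.
Proof.
move=> x0 y0 hz.
have [xpos|] := ltP 0 x; last first.
  move=> xle; have x00 : x = 0 by apply/le_anti; rewrite xle x0.
  rewrite x00 sqrtr0 mul0r; apply/ler_addgt0Pr => e e0; rewrite add0r.
  have l0 : 0 < (y + 1) / e by rewrite divr_gt0 // ltr_wpDl.
  apply: le_trans (hz _ l0) _; rewrite x00 mulr0 add0r invf_div.
  have w1 : y / (y + 1) <= 1 by rewrite ler_pdivrMr ?mul1r ?ltr_wpDl //; lra.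
  have w0 : 0 <= y / (y + 1) by rewrite divr_ge0 // addr_ge0.
  rewrite mulrCA; nra.
have [ypos|] := ltP 0 y; last first.
  move=> yle; have y00 : y = 0 by apply/le_anti; rewrite yle y0.
  rewrite y00 sqrtr0 mulr0; apply/ler_addgt0Pr => e e0; rewrite add0r.
  have l0 : 0 < e / (x + 1) by rewrite divr_gt0 // ltr_wpDl.
  apply: le_trans (hz _ l0) _; rewrite y00 mul0r addr0 mulrAC.
  have w1 : x / (x + 1) <= 1 by rewrite ler_pdivrMr ?mul1r ?ltr_wpDl //; lra.
  have w0 : 0 <= x / (x + 1) by rewrite divr_ge0 // addr_ge0.
  rewrite mulrAC mulrAC -mulrA; nra.
have sx : 0 < Num.sqrt x by rewrite sqrtr_gt0.
have sy : 0 < Num.sqrt y by rewrite sqrtr_gt0.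
apply: le_trans (hz (Num.sqrt y / Num.sqrt x) (divr_gt0 sy sx)) _.
rewrite -{2}(sqr_sqrtr x0) -{2}(sqr_sqrtr y0) invf_div.
set p := Num.sqrt x; set q := Num.sqrt y.
have -> : q / p * p ^+ 2 + q ^+ 2 * (p / q) = 2 * (p * q) by field; rewrite !gt_eqF.
by rewrite mulrC mulKf // pnatr_eq0.
Qed.

Lemma convex_exprn {R : realType} (s t th : R) n :
  0 <= s -> s <= t -> 0 <= th -> th <= 1 ->
  (s + th * (t - s)) ^+ n <= (1 - th) * s ^+ n + th * t ^+ n.
Proof.
move=> s0 st th0 th1; elim: n => [|n IH]; first by rewrite !expr0; lra.
set x := s + th * (t - s).
have x0 : 0 <= x by rewrite /x; nra.
have pq : s ^+ n <= t ^+ n by rewrite lerXn2r // nnegrE // (le_trans s0 st).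
rewrite exprS; apply: le_trans (ler_wpM2l x0 IH) _; rewrite !exprS.
set p := s ^+ n; set q := t ^+ n; rewrite -subr_ge0.
have -> : (1 - th) * (s * p) + th * (t * q) - x * ((1 - th) * p + th * q) =
  th * (1 - th) * ((t - s) * (q - p)) by rewrite /x; ring.
by apply: mulr_ge0; [apply: mulr_ge0; lra | apply: mulr_ge0; rewrite subr_ge0].
Qed.

Section AbsSeries.
Context {R : realType} {a : nat -> C R} {rho : R}.
Hypothesis a_cvg : forall z : C R, cmod z < rho -> cvgn (series (fun n => a n * z ^+ n)).

Lemma abs_series_cvg {t : R} : 0 <= t -> t < rho ->
  cvgn (series (fun n => cmod (a n) * t ^+ n)).
Proof.
move=> t0 trho; set t' := (t + rho) / 2.
have t't : t < t' by rewrite /t'; lra.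
have t'r : t' < rho by rewrite /t'; lra.
have t'0 : 0 < t' by lra.
have [M hM] : exists M, forall n, cmod (a n) * t' ^+ n <= M.
  have t'_cmod : cmod t'%:C < rho by rewrite cmod_real // ltW.
  have [M hM] := cvg_series_cmod_bounded _ (a_cvg _ t'_cmod).
  by exists M => n; have := hM n; rewrite cmodM cmodX cmod_real // ltW.
have q0 : 0 <= t / t' by rewrite divr_ge0 // ltW.
have q1 : t / t' < 1 by rewrite ltr_pdivrMr // mul1r.
have M0 : 0 <= M by apply: le_trans (hM 0%N); rewrite mulr_ge0 ?cmod_ge0 ?exprn_ge0 ?ltW.
apply: (@series_le_cvg _ _ (geometric M (t / t'))).
- by move=> n; rewrite mulr_ge0 ?cmod_ge0 ?exprn_ge0.
- by move=> n; rewrite /geometric /= mulr_ge0 ?exprn_ge0.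
- move=> n; rewrite /geometric /= expr_div_n mulrA ler_pdivlMr ?exprn_gt0 //.
  by rewrite mulrAC ler_wpM2r ?exprn_ge0.
- by apply: is_cvg_geometric_series; rewrite ger0_norm.
Qed.

Lemma abs_series_ge0 {t : R} : 0 <= t -> t < rho -> 0 <= abs_series a t.
Proof.
move=> t0 tr; have := nondecreasing_cvgn_le _ (abs_series_cvg t0 tr) 0%N.
rewrite /series /= big_geq //; apply.
by apply: nondecreasing_series => k _ _; rewrite mulr_ge0 ?cmod_ge0 ?exprn_ge0.
Qed.

Lemma le_abs_series {s t : R} : 0 <= s -> s <= t -> t < rho ->
  abs_series a s <= abs_series a t.
Proof.
move=> s0 st tr; have t0 := le_trans s0 st.
apply: lim_series_le; [exact: abs_series_cvg (le_lt_trans st tr) | exact: abs_series_cvg|].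
by move=> n; rewrite ler_wpM2l ?cmod_ge0 // lerXn2r // nnegrE.
Qed.

Lemma abs_series_convex {s t th : R} : 0 <= s -> s <= t -> t < rho -> 0 <= th -> th <= 1 ->
  abs_series a (s + th * (t - s)) <= (1 - th) * abs_series a s + th * abs_series a t.
Proof.
move=> s0 st tr th0 th1.
have h := cvg_series_lincomb (1 - th) th
  (abs_series_cvg s0 (le_lt_trans st tr)) (abs_series_cvg (le_trans s0 st) tr).
rewrite -(cvg_lim _ h) //; apply: lim_series_le.
- by apply: abs_series_cvg; nra.
- by apply/cvg_ex; exists ((1 - th) * abs_series a s + th * abs_series a t).
move=> n; rewrite mulrCA (mulrCA th) -mulrDr.
by rewrite ler_wpM2l ?cmod_ge0 ?convex_exprn.
Qed.

(* Convexity gives right continuity: interpolate between [s] and a point [t0 > s]. *)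
Lemma abs_series_right_cont {s e : R} : 0 <= s -> s < rho -> 0 < e ->
  exists t, [/\ s < t, t < rho & abs_series a t < abs_series a s + e].
Proof.
move=> s0 sr e0; set t0 := (s + rho) / 2.
have st0 : s < t0 by rewrite /t0; lra.
have t0r : t0 < rho by rewrite /t0; lra.
set D := abs_series a t0 - abs_series a s.
have D0 : 0 <= D by rewrite /D subr_ge0 le_abs_series // ltW.
set th := e / (e + D).
have th0 : 0 < th by rewrite /th divr_gt0 //; lra.
have th1 : th <= 1 by rewrite /th ler_pdivrMr ?mul1r; lra.
have thD : th * D < e by rewrite /th mulrAC ltr_pdivrMr ?ltr_pM2l; lra.
exists (s + th * (t0 - s)); split; [nra | nra |].
apply: le_lt_trans (abs_series_convex s0 (ltW st0) t0r (ltW th0) th1) _.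
by rewrite /D in thD; lra.
Qed.

(* Cauchy-Schwarz for the weights [|a_n|]: termwise
   [u^n v^n <= (l u^2n + v^2n / l) / 2], then optimize over [l > 0]. *)
Lemma abs_series_mul_le {u v : R} : 0 <= u -> 0 <= v -> u ^+ 2 < rho -> v ^+ 2 < rho ->
  abs_series a (u * v) <=
  Num.sqrt (abs_series a (u ^+ 2)) * Num.sqrt (abs_series a (v ^+ 2)).
Proof.
move=> u0 v0 ur vr; have u20 := sqr_ge0 u; have v20 := sqr_ge0 v.
apply: le_sqrtM_of_amgm; rewrite ?abs_series_ge0 // => l l0.
have h := cvg_series_lincomb (l / 2) (2 * l)^-1 (abs_series_cvg u20 ur) (abs_series_cvg v20 vr).
have -> : (l * abs_series a (u ^+ 2) + abs_series a (v ^+ 2) / l) / 2 =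
   l / 2 * abs_series a (u ^+ 2) + (2 * l)^-1 * abs_series a (v ^+ 2).
  by field; rewrite gt_eqF.
rewrite -(cvg_lim _ h) //; apply: lim_series_le.
- by apply: abs_series_cvg; nra.
- by apply/cvg_ex; eexists; exact: h.
move=> n; rewrite mulrCA (mulrCA (2 * l)^-1) -mulrDr ler_wpM2l ?cmod_ge0 //.
rewrite exprMn -!exprM mulnC !exprM; set p := u ^+ n; set q := v ^+ n.
rewrite -subr_ge0.
have -> : l / 2 * p ^+ 2 + (2 * l)^-1 * q ^+ 2 - p * q = (l * p - q) ^+ 2 / (2 * l).
  by field; rewrite gt_eqF.
by rewrite divr_ge0 ?sqr_ge0 //; lra.
Qed.

Lemma abs_series_mul_sqrt_le {u w : R} : 0 <= u -> 0 <= w -> u ^+ 2 < rho -> w < rho ->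
  abs_series a (u * Num.sqrt w) <=
  Num.sqrt (abs_series a (u ^+ 2)) * Num.sqrt (abs_series a w).
Proof.
move=> u0 w0 ur wr; have := abs_series_mul_le u0 (sqrtr_ge0 w) ur.
by rewrite sqr_sqrtr //; apply.
Qed.

End AbsSeries.

Section RealNorm.
Context {R : realType} {H : completeNormedModType (C R)}.
Implicit Types (x y : H).

Lemma rnormE x : `|x| = (rnorm x)%:C.
Proof. exact: complex_ge0E. Qed.

Lemma rnorm_ge0 x : 0 <= rnorm x.
Proof. by rewrite -ler0c -rnormE. Qed.

Lemma rnormD x y : rnorm (x + y) <= rnorm x + rnorm y.
Proof. by rewrite -lecR rmorphD /= -!rnormE ler_normD. Qed.

Lemma rnormZ (c : C R) x : rnorm (c *: x) = cmod c * rnorm x.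
Proof. by apply: complexI; rewrite -rnormE normrZ rmorphM /= -cmodE -rnormE. Qed.

Lemma rnormN x : rnorm (- x) = rnorm x.
Proof. by rewrite /rnorm normrN. Qed.

Lemma rnorm0 : rnorm (0 : H) = 0.
Proof. by rewrite /rnorm normr0. Qed.

Lemma rnorm_eq0 x : rnorm x = 0 -> x = 0.
Proof. by move=> h; apply/normr0_eq0; rewrite rnormE h. Qed.

Lemma rnorm_sum (I : Type) (s : seq I) (P : pred I) (F : I -> H) :
  rnorm (\sum_(i <- s | P i) F i) <= \sum_(i <- s | P i) rnorm (F i).
Proof.
elim/big_rec2: _ => [|i y1 y2 _ h]; first by rewrite rnorm0.
by apply: le_trans (rnormD _ _) _; rewrite lerD2l.
Qed.

Lemma rnorm_lt_nbhs {e : C R} : 0 < e ->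
  exists2 d : R, 0 < d & forall x : H, rnorm x < d -> `|x| < e.
Proof.
move=> e0; have e0' : 0 < complex.Re e by move: e0; rewrite ltcE => /andP[].
by exists (complex.Re e) => // x; rewrite rnormE (complex_ge0E _ (ltW e0)) ltcR.
Qed.

Lemma lim_le_of_lipschitz {q : H -> R} {K L : R} {s : nat -> H} {l : H} : 0 <= K ->
  (forall y z, q y <= q z + K * rnorm (y - z)) ->
  s @ \oo --> l -> (\forall n \near \oo, q (s n) <= L) -> q l <= L.
Proof.
move=> K0 hq /cvgrPdist_lt sl hL; apply/ler_addgt0Pr => e e0.
have d0 : 0 < e / (K + 1) by rewrite divr_gt0 // ltr_wpDl.
have d0' : (0 : C R) < (e / (K + 1))%:C by rewrite ltcR.
have [n [hn1 hn2]] : exists n, `|l - s n| < (e / (K + 1))%:C /\ q (s n) <= L.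
  by have [n hn] := filter_ex (filterI (sl _ d0') hL); exists n.
rewrite rnormE ltcR in hn1.
apply: le_trans (hq l (s n)) _; rewrite lerD //.
have -> : e = (K + 1) * (e / (K + 1)) by rewrite mulrC divfK // gt_eqF // ltr_wpDl.
by rewrite ler_pM // ?rnorm_ge0 ?lerDl // ltW.
Qed.

Lemma lim_rnorm_le (s : nat -> H) (l : H) (L : R) :
  s @ \oo --> l -> (\forall n \near \oo, rnorm (s n) <= L) -> rnorm l <= L.
Proof.
apply: (@lim_le_of_lipschitz rnorm 1) => // y z.
by rewrite mul1r -{1}(subrK z y) addrC rnormD.
Qed.

Lemma cvg_series_dominated {u : nat -> H} {b : nat -> R} :
  (forall n, rnorm (u n) <= b n) -> cvgn (series b) -> cvgn (series u).
Proof.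
move=> ub hb; apply/cauchy_cvgP/cauchy_seriesP => e e0.
have [d d0 hd] := rnorm_lt_nbhs e0.
have b_cauchy : cauchy (series b @ \oo) by apply/cauchy_cvgP.
have := (cauchy_seriesP b).1 b_cauchy _ d0.
apply: filterS => n /= hn; apply/hd.
apply: le_lt_trans (rnorm_sum _ _ _ _) (le_lt_trans _ hn).
by apply: le_trans (real_ler_norm (num_real _)); apply: ler_sum => i _.
Qed.

Lemma rnorm_lim_series_le {u : nat -> H} {b : nat -> R} :
  (forall n, rnorm (u n) <= b n) -> cvgn (series b) ->
  rnorm (limn (series u)) <= limn (series b).
Proof.
move=> ub hb; apply: lim_rnorm_le; first exact: cvg_series_dominated ub hb.
near=> n; apply: le_trans (rnorm_sum _ _ _ _) _.
apply: le_trans (ler_sum _ (fun i _ => ub i)) _.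
apply: nondecreasing_cvgn_le => //; apply: nondecreasing_series => k _ _.
exact: le_trans (rnorm_ge0 _) (ub k).
Unshelve. all: by end_near.
Qed.

Lemma cvg_to0_geometric (u : nat -> H) (c q : R) : 0 <= q -> q < 1 ->
  (forall n, rnorm (u n) <= c * q ^+ n) -> u @ \oo --> 0.
Proof.
move=> q0 q1 hu; apply/cvgrPdist_lt => e e0.
have [d d0 hd] := rnorm_lt_nbhs e0.
have /cvgrPdist_lt/(_ _ d0) : geometric c q @ \oo --> (0 : R).
  by apply: cvg_geometric; rewrite ger0_norm.
apply: filterS => n; rewrite !sub0r !normrN /geometric /= => h.
by apply/hd; rewrite (le_lt_trans (hu n)) // (le_lt_trans (ler_norm _)).
Qed.

End RealNorm.

Section BoundedOperators.
Context {R : realType} {H : completeNormedModType (C R)}.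
Implicit Types (T S : H -> H) (x y : H).

Lemma bop0 {T} : bounded_op T -> T 0 = 0.
Proof.
by case=> hD _ _; apply: (addrI (T 0)); rewrite addr0 -hD addr0.
Qed.

Lemma bopN {T} x : bounded_op T -> T (- x) = - T x.
Proof.
move=> hT; have T0 := bop0 hT; case: hT => hD _ _.
by apply/eqP; rewrite -subr_eq0 opprK -hD addNr T0.
Qed.

Lemma bopB {T} x y : bounded_op T -> T (x - y) = T x - T y.
Proof. by move=> hT; have TN := bopN y hT; case: hT => hD _ _; rewrite hD TN. Qed.

Lemma bop_bound {T} : bounded_op T ->
  exists2 M, 0 <= M & forall x, rnorm (T x) <= M * rnorm x.
Proof.
case=> _ _ [M hM]; exists `|M| => // x.
by apply: le_trans (hM x) _; rewrite ler_wpM2r ?rnorm_ge0 ?ler_norm.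
Qed.

Lemma bop_comp {T S} : bounded_op T -> bounded_op S -> bounded_op (T \o S).
Proof.
move=> hT hS; have [M M0 hM] := bop_bound hT; have [N N0 hN] := bop_bound hS.
case: hT => TD TZ _; case: hS => SD SZ _.
split=> [x y|c x|] /=; [by rewrite SD TD | by rewrite SZ TZ |].
exists (M * N) => x; apply: le_trans (hM _) _.
by rewrite -mulrA ler_wpM2l.
Qed.

Lemma bop_iter {T} n : bounded_op T -> bounded_op (iter n T).
Proof.
move=> hT; elim: n => [|n IH]; first by split=> //=; exists 1 => x; rewrite mul1r.
have -> : iter n.+1 T = T \o iter n T by apply: funext => x; rewrite iterS.
exact: bop_comp.
Qed.

Lemma bop_cvg {T} {s : nat -> H} {l : H} : bounded_op T ->
  s @ \oo --> l -> (fun n => T (s n)) @ \oo --> T l.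
Proof.
move=> hT; have [M M0 hM] := bop_bound hT.
move=> /cvgrPdist_lt sl; apply/cvgrPdist_lt => e e0.
have [d d0 hd] := rnorm_lt_nbhs (H := H) e0.
have d'0 : (0 : C R) < (d / (M + 1))%:C by rewrite ltcR divr_gt0 // ltr_wpDl.
apply: filterS (sl _ d'0) => n; rewrite rnormE ltcR -bopB // => h; apply/hd.
have h' : (M + 1) * rnorm (l - s n) < d by rewrite mulrC -ltr_pdivlMr ?ltr_wpDl.
apply: le_lt_trans (hM _) (le_lt_trans _ h').
by rewrite ler_wpM2r ?rnorm_ge0 ?lerDl.
Qed.

End BoundedOperators.

Section OperatorNorm.
Context {R : realType} {H : completeNormedModType (C R)}.
Implicit Types (T S : H -> H) (x : H).

Lemma opnorm_has_sup {T} : bounded_op T ->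
  has_sup [set rnorm (T x) | x in [set x : H | rnorm x <= 1]].
Proof.
move=> hT; have [M M0 hM] := bop_bound hT.
split; first by exists (rnorm (T 0)), 0 => //=; rewrite rnorm0 ler01.
exists M => _ [x /= hx <-]; apply: le_trans (hM x) _.
by rewrite -{2}(mulr1 M) ler_wpM2l.
Qed.

Lemma opnormP {T} x : bounded_op T -> rnorm (T x) <= opnorm T * rnorm x.
Proof.
move=> hT; have [->|xn0] := eqVneq x 0; first by rewrite (bop0 hT) rnorm0 mulr0.
have x_gt0 : 0 < rnorm x.
  by rewrite lt_neqAle rnorm_ge0 andbT eq_sym; apply: contra xn0 => /eqP/rnorm_eq0->.
set y := (rnorm x)^-1%:C *: x.
have ry : rnorm y <= 1.
  by rewrite rnormZ cmod_real ?invr_ge0 ?rnorm_ge0 // mulVf // gt_eqF.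
have := sup_upper_bound (opnorm_has_sup hT) (ex_intro2 _ _ y ry erefl).
case: hT => _ hZ _; rewrite /= hZ rnormZ cmod_real ?invr_ge0 ?rnorm_ge0 //.
by move=> h; rewrite -ler_pdivrMr // mulrC.
Qed.

Lemma opnorm_ge0 {T} : bounded_op T -> 0 <= opnorm T.
Proof.
move=> hT; have h0 : rnorm (0 : H) <= 1 by rewrite rnorm0 ler01.
have := sup_upper_bound (opnorm_has_sup hT) (ex_intro2 _ _ (0 : H) h0 erefl).
by rewrite (bop0 hT) rnorm0.
Qed.

Lemma opnorm_le {T} (M : R) : 0 <= M ->
  (forall x, rnorm (T x) <= M * rnorm x) -> opnorm T <= M.
Proof.
move=> M0 hM; apply: ge_sup; first by exists (rnorm (T 0)), 0 => //=; rewrite rnorm0 ler01.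
move=> _ [x /= hx <-]; apply: le_trans (hM x) _.
by rewrite -{2}(mulr1 M) ler_wpM2l.
Qed.

Lemma opnorm_comp_le {T S} : bounded_op T -> bounded_op S ->
  opnorm (T \o S) <= opnorm T * opnorm S.
Proof.
move=> hT hS; apply: opnorm_le; first by rewrite mulr_ge0 ?opnorm_ge0.
move=> x /=; apply: le_trans (opnormP _ hT) _; rewrite -mulrA.
by rewrite ler_wpM2l ?opnorm_ge0 ?opnormP.
Qed.

Lemma opnorm_sqr_le {T} : bounded_op T -> opnorm (T \o T) <= opnorm T ^+ 2.
Proof. by move=> hT; rewrite expr2 opnorm_comp_le. Qed.

Lemma sqrt_opnorm_sqr_le {T} : bounded_op T -> Num.sqrt (opnorm (T \o T)) <= opnorm T.
Proof.
move=> hT; rewrite -(ger0_norm (opnorm_ge0 hT)) -sqrtr_sqr ler_sqrt ?sqr_ge0 //.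
exact: opnorm_sqr_le.
Qed.

Lemma rnorm_iter_le {T} (M : R) n x : 0 <= M ->
  (forall y, rnorm (T y) <= M * rnorm y) -> rnorm (iter n T x) <= M ^+ n * rnorm x.
Proof.
move=> M0 hM; elim: n => [|n IH]; first by rewrite expr0 mul1r.
by rewrite iterS exprS -mulrA; apply: le_trans (hM _) _; rewrite ler_wpM2l.
Qed.

End OperatorNorm.

(* Neumann series: when the iterates of [V] grow at most like [M ^ k] with
   [M < |lam|], the inverse of [V - lam] is [- sum_k lam^-(k+1) V^k]. *)
Section Neumann.
Context {R : realType} {H : completeNormedModType (C R)}.
Context {V : H -> H} {c M : R} {lam : C R}.
Hypotheses (hV : bounded_op V) (M0 : 0 <= M)
  (V_iter : forall k x, rnorm (iter k V x) <= c * M ^+ k * rnorm x)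
  (M_lt : M < cmod lam).

Let lam_gt0 : 0 < cmod lam. Proof. exact: le_lt_trans M_lt. Qed.
Let lam_neq0 : lam != 0.
Proof. by apply: contraTneq lam_gt0 => ->; rewrite /cmod normr0 ltxx. Qed.
Let q := M / cmod lam.
Let q0 : 0 <= q. Proof. by rewrite divr_ge0 // ltW. Qed.
Let q1 : q < 1. Proof. by rewrite ltr_pdivrMr // mul1r. Qed.

Let term (x : H) k := lam ^- k.+1 *: iter k V x.
Let partial (x : H) := series (term x).

Let term_le (x : H) k : rnorm (term x k) <= geometric (c * rnorm x / cmod lam) q k.
Proof.
rewrite /term rnormZ cmodV cmodX /geometric /= /q expr_div_n exprS invfM.
have -> : c * rnorm x / cmod lam * (M ^+ k / cmod lam ^+ k) =
    (cmod lam)^-1 * (cmod lam ^+ k)^-1 * (c * M ^+ k * rnorm x).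
  by field; rewrite expf_neq0 ?gt_eqF.
by rewrite ler_wpM2l ?V_iter // mulr_ge0 // invr_ge0 ?exprn_ge0 // ltW.
Qed.

Let geometric_cvg (x : H) : cvgn (series (geometric (c * rnorm x / cmod lam) q)).
Proof. by apply: is_cvg_geometric_series; rewrite ger0_norm. Qed.

Let partial_cvg (x : H) : cvgn (partial x).
Proof. exact: cvg_series_dominated (term_le x) (geometric_cvg x). Qed.

Let partial_telescope (x : H) n :
  V (partial x n) - lam *: partial x n = lam ^- n *: iter n V x - x.
Proof.
elim: n => [|n IH].
  by rewrite /partial /series /= big_geq // (bop0 hV) scaler0 subrr expr0 invr1 scale1r subrr.
rewrite /partial /series /= big_nat_recr //= -/(series (term x) n) -/(partial x n).
case: (hV) => hD hZ _; rewrite hD hZ scalerDr opprD addrACA IH /term scalerA -iterS.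
have -> : lam / lam ^+ n.+1 = lam ^- n by rewrite exprS invfM mulrA (mulfV lam_neq0) mul1r.
by rewrite addrCA (addrAC (lam ^- n *: _)) subrr add0r.
Qed.

Let partial_comm (x : H) n :
  partial (V x - lam *: x) n = V (partial x n) - lam *: partial x n.
Proof.
elim: n => [|n IH]; first by rewrite /partial /series /= !big_geq // (bop0 hV) scaler0 subrr.
rewrite /partial /series /= in IH *; rewrite !big_nat_recr //= IH.
case: (hV) => hD hZ _; rewrite hD hZ scalerDr opprD addrACA; congr (_ + _).
have hVn := bop_iter n hV; rewrite /term (bopB _ _ hVn); case: hVn => _ hZn _.
by rewrite hZn -iterSr iterS scalerBr !scalerA mulrC.
Qed.

Let residual_cvg (x : H) : (fun n => V (partial x n) - lam *: partial x n) @ \oo --> - x.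
Proof.
have decay : (fun n => lam ^- n *: iter n V x) @ \oo --> 0.
  apply: (@cvg_to0_geometric _ _ _ (c * rnorm x) q) => // n.
  rewrite rnormZ cmodV cmodX; apply: le_trans (ler_wpM2l _ (V_iter n x)) _.
    by rewrite invr_ge0 exprn_ge0 // ltW.
  rewrite /q expr_div_n [leRHS](_ : _ = (cmod lam ^+ n)^-1 * (c * M ^+ n * rnorm x)) //.
  by field; rewrite expf_neq0 // gt_eqF.
under eq_fun do rewrite partial_telescope.
by have := cvgB decay (cvg_cst x); rewrite sub0r; apply.
Qed.

Let resolvent (x : H) := - limn (partial x).

Let resolvent_left (x : H) : resolvent (V x - lam *: x) = x.
Proof.
rewrite /resolvent (_ : partial _ = fun n => V (partial x n) - lam *: partial x n).
  by rewrite (cvg_lim _ (residual_cvg x)) ?opprK.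
by apply: funext => n; rewrite partial_comm.
Qed.

Let resolvent_right (x : H) : V (resolvent x) - lam *: resolvent x = x.
Proof.
have h : (fun n => V (partial x n) - lam *: partial x n) @ \oo -->
    V (limn (partial x)) - lam *: limn (partial x).
  by apply: cvgB; [exact: bop_cvg hV (partial_cvg x) | exact: cvgZ (cvg_cst _) (partial_cvg x)].
rewrite /resolvent (bopN _ hV) scalerN opprK addrC -opprB -(cvg_lim _ h) //.
by rewrite (cvg_lim _ (residual_cvg x)) // opprK.
Qed.

Let partialD (x y : H) : partial (x + y) = fun n => partial x n + partial y n.
Proof.
apply: funext => n; rewrite /partial /series /= -big_split; apply: eq_bigr => k _.
by rewrite /term; case: (bop_iter k hV) => hD _ _; rewrite hD scalerDr.
Qed.

Let partialZ (z : C R) (x : H) : partial (z *: x) = fun n => z *: partial x n.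
Proof.
apply: funext => n; rewrite /partial /series /= scaler_sumr; apply: eq_bigr => k _.
by rewrite /term; case: (bop_iter k hV) => _ hZ _; rewrite hZ !scalerA mulrC.
Qed.

Let resolvent_bounded : bounded_op resolvent.
Proof.
split=> [x y|z x|].
- by rewrite /resolvent partialD (cvg_lim _ (cvgD (partial_cvg x) (partial_cvg y))) // opprD.
- by rewrite /resolvent partialZ (cvg_lim _ (cvgZ (cvg_cst z) (partial_cvg x))) // scalerN.
exists (c / cmod lam * (1 - q)^-1) => x; rewrite /resolvent rnormN.
apply: le_trans (rnorm_lim_series_le (term_le x) (geometric_cvg x)) _.
rewrite (cvg_lim _ (cvg_geometric_series _)) ?ger0_norm //.
by rewrite [leRHS]mulrAC [c / _ * rnorm x]mulrAC.
Qed.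

Lemma neumann_not_spectrum : ~ spectrum V lam.
Proof.
apply; exists resolvent; split; first exact: resolvent_bounded.
  exact: resolvent_left.
exact: resolvent_right.
Qed.

End Neumann.

Definition geometric_growth {R : realType} {H : completeNormedModType (C R)}
    (P : H -> H) (t : R) :=
  exists2 c : R, 0 <= c & forall j x, rnorm (iter j P x) <= c * t ^+ j * rnorm x.

(* Renorming: under [geometric_growth P t] this norm is equivalent to [rnorm]
   and [P] has norm at most [t] for it, so [f(P)] has norm at most [f_a(t)]. *)
Definition weighted_norm {R : realType} {H : completeNormedModType (C R)}
    (P : H -> H) (t : R) (x : H) :=
  sup [set rnorm (iter j P x) / t ^+ j | j in [set: nat]].

Section Renorming.
Context {R : realType} {H : completeNormedModType (C R)} {a : nat -> C R} {rho : R}.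
Hypothesis a_cvg : forall z : C R, cmod z < rho -> cvgn (series (fun n => a n * z ^+ n)).
Context {P : H -> H} {t c : R}.
Hypotheses (hP : bounded_op P) (t_gt0 : 0 < t) (t_lt : t < rho) (c0 : 0 <= c)
  (P_iter : forall j x, rnorm (iter j P x) <= c * t ^+ j * rnorm x).

Let weighted_has_sup (x : H) : has_sup [set rnorm (iter j P x) / t ^+ j | j in [set: nat]].
Proof.
split; first by exists (rnorm (iter 0 P x) / t ^+ 0), 0%N.
exists (c * rnorm x) => _ [j _ <-].
by rewrite ler_pdivrMr ?exprn_gt0 // mulrAC; apply: le_trans (P_iter j x) _; rewrite mulrAC.
Qed.

Lemma weighted_norm_ub (x : H) j : rnorm (iter j P x) / t ^+ j <= weighted_norm P t x.
Proof. exact: sup_upper_bound (weighted_has_sup x) _ (ex_intro2 _ _ j I erefl). Qed.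

Let weighted_norm_le_of (x : H) (L : R) :
  (forall j, rnorm (iter j P x) / t ^+ j <= L) -> weighted_norm P t x <= L.
Proof.
move=> hL; apply: ge_sup; first by exists (rnorm (iter 0 P x) / t ^+ 0), 0%N.
by move=> _ [j _ <-].
Qed.

Lemma weighted_norm_le (x : H) : weighted_norm P t x <= c * rnorm x.
Proof.
apply: weighted_norm_le_of => j.
by rewrite ler_pdivrMr ?exprn_gt0 // mulrAC; apply: le_trans (P_iter j x) _; rewrite mulrAC.
Qed.

Lemma rnorm_le_weighted_norm (x : H) : rnorm x <= weighted_norm P t x.
Proof. by have := weighted_norm_ub x 0%N; rewrite expr0 divr1. Qed.

Lemma weighted_normD (x y : H) :
  weighted_norm P t (x + y) <= weighted_norm P t x + weighted_norm P t y.
Proof.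
apply: weighted_norm_le_of => j; case: (bop_iter j hP) => hD _ _; rewrite hD.
apply: (@le_trans _ _ ((rnorm (iter j P x) + rnorm (iter j P y)) / t ^+ j)).
  by rewrite ler_pM2r ?invr_gt0 ?exprn_gt0 ?rnormD.
by rewrite mulrDl lerD ?weighted_norm_ub.
Qed.

Lemma weighted_normZ (z : C R) (x : H) :
  weighted_norm P t (z *: x) <= cmod z * weighted_norm P t x.
Proof.
apply: weighted_norm_le_of => j; case: (bop_iter j hP) => _ hZ _.
by rewrite hZ rnormZ -mulrA ler_wpM2l ?cmod_ge0 ?weighted_norm_ub.
Qed.

Lemma weighted_norm_iter (x : H) k :
  weighted_norm P t (iter k P x) <= t ^+ k * weighted_norm P t x.
Proof.
apply: weighted_norm_le_of => j; rewrite -iterD -ler_pdivrMl ?exprn_gt0 //.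
by rewrite mulrC -mulrA -invfM -exprD weighted_norm_ub.
Qed.

Lemma weighted_norm_lipschitz (y z : H) :
  weighted_norm P t y <= weighted_norm P t z + c * rnorm (y - z).
Proof.
rewrite -{1}(subrK z y) addrC.
by apply: le_trans (weighted_normD _ _) _; rewrite lerD2l weighted_norm_le.
Qed.

Lemma weighted_norm_sum n (F : nat -> H) :
  weighted_norm P t (\sum_(0 <= k < n) F k) <= \sum_(0 <= k < n) weighted_norm P t (F k).
Proof.
elim/big_rec2: _ => [|k y1 y2 _ h].
  by apply: le_trans (weighted_norm_le 0) _; rewrite rnorm0 mulr0.
by apply: le_trans (weighted_normD _ _) _; rewrite lerD2l.
Qed.

Let fa_cvg : cvgn (series (fun n => cmod (a n) * t ^+ n)).
Proof. exact: (abs_series_cvg a_cvg (ltW t_gt0) t_lt). Qed.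
Let fa_ge0 : 0 <= abs_series a t.
Proof. exact: (abs_series_ge0 a_cvg (ltW t_gt0) t_lt). Qed.

Lemma op_series_cvg (x : H) : cvgn (series (fun n => a n *: iter n P x)).
Proof.
apply: (@cvg_series_dominated _ _ _ (fun n => c * rnorm x * (cmod (a n) * t ^+ n))).
  move=> n; rewrite rnormZ; apply: le_trans (ler_wpM2l (cmod_ge0 _) (P_iter n x)) _.
  by rewrite [leRHS](_ : _ = cmod (a n) * (c * t ^+ n * rnorm x)) //; ring.
exact: is_cvg_seriesZ fa_cvg.
Qed.

Lemma weighted_norm_op_series (x : H) :
  weighted_norm P t (op_series a P x) <= abs_series a t * weighted_norm P t x.
Proof.
apply: (lim_le_of_lipschitz c0 weighted_norm_lipschitz (op_series_cvg x)).
near=> n; apply: le_trans (weighted_norm_sum _ _) _.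
apply: (@le_trans _ _ (\sum_(0 <= k < n) (cmod (a k) * t ^+ k) * weighted_norm P t x)).
  apply: ler_sum => k _; apply: le_trans (weighted_normZ _ _) _.
  by rewrite -mulrA ler_wpM2l ?cmod_ge0 ?weighted_norm_iter.
rewrite -mulr_suml ler_wpM2r //.
  exact: le_trans (rnorm_ge0 _) (rnorm_le_weighted_norm x).
apply: nondecreasing_cvgn_le fa_cvg _.
by apply: nondecreasing_series => k _ _; rewrite mulr_ge0 ?cmod_ge0 ?exprn_ge0 ?ltW.
Unshelve. all: by end_near.
Qed.

Lemma op_series_bounded : bounded_op (op_series a P).
Proof.
split=> [x y|z x|].
- rewrite /op_series (_ : series _ = fun m => series (fun n => a n *: iter n P x) m +
                                         series (fun n => a n *: iter n P y) m).
    by rewrite (cvg_lim _ (cvgD (op_series_cvg x) (op_series_cvg y))).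
  apply: funext => m; rewrite /series /= -big_split; apply: eq_bigr => k _.
  by case: (bop_iter k hP) => hD _ _; rewrite hD scalerDr.
- rewrite /op_series (_ : series _ = fun m => z *: series (fun n => a n *: iter n P x) m).
    by rewrite (cvg_lim _ (cvgZ (cvg_cst z) (op_series_cvg x))).
  apply: funext => m; rewrite /series /= scaler_sumr; apply: eq_bigr => k _.
  by case: (bop_iter k hP) => _ hZ _; rewrite hZ !scalerA mulrC.
exists (abs_series a t * c) => x.
apply: le_trans (rnorm_le_weighted_norm _) _.
apply: le_trans (weighted_norm_op_series x) _.
by rewrite -mulrA ler_wpM2l ?weighted_norm_le.
Qed.

Lemma op_series_growth : geometric_growth (op_series a P) (abs_series a t).
Proof.
exists c => // k x; apply: le_trans (rnorm_le_weighted_norm _) _.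
have : weighted_norm P t (iter k (op_series a P) x) <= abs_series a t ^+ k * weighted_norm P t x.
  elim: k => [|k IH]; first by rewrite expr0 mul1r.
  rewrite iterS exprS -mulrA; apply: le_trans (weighted_norm_op_series _) _.
  by rewrite ler_wpM2l.
move/le_trans; apply; rewrite (mulrC c) -mulrA ler_wpM2l ?exprn_ge0 //.
exact: weighted_norm_le.
Qed.

Lemma spectrum_op_series_cmod_le {lam} :
  spectrum (op_series a P) lam -> cmod lam <= abs_series a t.
Proof.
have [d _ hd] := op_series_growth.
rewrite leNgt => hlam; apply/negP => lt_lam.
exact: neumann_not_spectrum op_series_bounded fa_ge0 hd lt_lam hlam.
Qed.

End Renorming.

Lemma spec_radius_op_series_le {R : realType} {H : completeNormedModType (C R)}
    {a : nat -> C R} {rho : R} {P : H -> H} {s : R} :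
  (forall z : C R, cmod z < rho -> cvgn (series (fun n => a n * z ^+ n))) ->
  bounded_op P -> 0 <= s -> s < rho ->
  (forall t, s < t -> t < rho -> geometric_growth P t) ->
  spec_radius (op_series a P) <= abs_series a s.
Proof.
move=> a_cvg hP s0 s_lt growth.
have bound lam : spectrum (op_series a P) lam -> cmod lam <= abs_series a s.
  move=> hlam; rewrite leNgt; apply/negP => lt_lam.
  have gap : 0 < cmod lam - abs_series a s by rewrite subr_gt0.
  have [t [st t_lt ft]] := abs_series_right_cont a_cvg s0 s_lt gap.
  have [c c0 P_iter] := growth t st t_lt.
  rewrite addrC subrK in ft.
  have := spectrum_op_series_cmod_le a_cvg hP (le_lt_trans s0 st) t_lt c0 P_iter hlam.
  by rewrite leNgt ft.
have [ne|empty] := pselect ([set cmod l | l in spectrum (op_series a P)] !=set0).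
  by apply: ge_sup => // _ [l hl <-]; exact: bound.
rewrite /spec_radius (_ : [set cmod l | l in _] = set0).
  by rewrite sup0 (abs_series_ge0 a_cvg s0 s_lt).
by apply/seteqP; split => // y hy; apply: empty; exists y.
Qed.

Lemma iter_commute {T : Type} (f g : T -> T) j x :
  (forall y, f (g y) = g (f y)) -> g (iter j f x) = iter j f (g x).
Proof. by move=> fg; elim: j => //= j IH; rewrite -IH fg. Qed.

Lemma iter_comp_commute {T : Type} (f g : T -> T) j x :
  (forall y, f (g y) = g (f y)) -> iter j (f \o g) x = iter j f (iter j g x).
Proof. by move=> fg; elim: j => //= j IH; rewrite IH (iter_commute _ _ _ _ fg). Qed.

Section Growth.
Context {R : realType} {H : completeNormedModType (C R)}.
Implicit Types (P A B : H -> H).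

Lemma geometric_growth_le {P} {s t : R} : 0 <= s -> s <= t ->
  geometric_growth P s -> geometric_growth P t.
Proof.
move=> s0 st [c c0 hc]; exists c => // j x; apply: le_trans (hc j x) _.
by rewrite ler_wpM2r ?rnorm_ge0 // ler_wpM2l // lerXn2r // nnegrE (le_trans s0 st).
Qed.

Lemma opnorm_growth {P} : bounded_op P -> geometric_growth P (opnorm P).
Proof.
move=> hP; exists 1 => // j x; rewrite mul1r.
by apply: rnorm_iter_le; rewrite ?opnorm_ge0 // => y; apply: opnormP.
Qed.

(* Even powers [B^(2k) = (B^2)^k] grow like [|B^2|^k]; odd powers lose one
   extra factor [|B|]. *)
Lemma sqrt_opnorm_sqr_growth {B} {u : R} : bounded_op B ->
  Num.sqrt (opnorm (B \o B)) < u -> geometric_growth B u.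
Proof.
move=> hB su; have hBB := bop_comp hB hB.
have u0 : 0 < u by apply: le_lt_trans su; exact: sqrtr_ge0.
have BB_le : opnorm (B \o B) <= u ^+ 2.
  by rewrite -(sqr_sqrtr (opnorm_ge0 hBB)) lerXn2r ?nnegrE ?sqrtr_ge0 ?(ltW u0) // ltW.
set c := 1 + opnorm B / u.
have c1 : 1 <= c by rewrite lerDl divr_ge0 ?opnorm_ge0 // ltW.
have c0 : 0 <= c := le_trans ler01 c1.
suff even_odd j x : rnorm (iter j B x) <= c * u ^+ j * rnorm x /\
                    rnorm (iter j.+1 B x) <= c * u ^+ j.+1 * rnorm x.
  by exists c => // j x; case: (even_odd j x).
elim: j x => [|j IH] x.
  split; first by rewrite expr0 mulr1 ler_peMl // rnorm_ge0.
  apply: le_trans (opnormP _ hB) _; rewrite expr1 ler_wpM2r ?rnorm_ge0 //.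
  by rewrite /c mulrDl mul1r divfK ?gt_eqF // lerDr ltW.
split; first exact: (IH x).2.
rewrite -addn2 iterD; apply: le_trans (IH _).1 _.
apply: le_trans (ler_wpM2l (mulr_ge0 c0 (exprn_ge0 _ (ltW u0))) (opnormP _ hBB)) _.
have -> : c * u ^+ (j + 2) * rnorm x = c * u ^+ j * (u ^+ 2 * rnorm x).
  by rewrite exprD; ring.
apply: ler_wpM2l; first by rewrite mulr_ge0 ?exprn_ge0 // ltW.
by rewrite ler_wpM2r ?rnorm_ge0.
Qed.

Lemma geometric_growth_comp_commute {A B} {s u : R} :
  (forall x, A (B x) = B (A x)) -> 0 <= s ->
  geometric_growth A s -> geometric_growth B u -> geometric_growth (A \o B) (s * u).
Proof.
move=> AB s0 [cA cA0 hA] [cB cB0 hB]; exists (cA * cB); first exact: mulr_ge0.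
move=> j x; rewrite iter_comp_commute //; apply: le_trans (hA _ _) _.
apply: le_trans (ler_wpM2l (mulr_ge0 cA0 (exprn_ge0 _ s0)) (hB j x)) _.
by rewrite [leRHS](_ : _ = cA * s ^+ j * (cB * u ^+ j * rnorm x)) //; rewrite exprMn; ring.
Qed.

End Growth.

Lemma mul_lt_of_sqr_lt {R : realFieldType} {x y r : R} : 0 <= x -> 0 <= y ->
  x ^+ 2 < r -> y ^+ 2 < r -> x * y < r.
Proof. by move=> x0 y0; rewrite !expr2 => xr yr; nra. Qed.

Lemma sqrt_mean_bounds {R : rcfType} {n p q : R} :
  0 <= n -> 0 <= p -> 0 <= q -> n <= p * q ->
  n <= Num.sqrt p * Num.sqrt q * Num.sqrt n <= p * q.
Proof.
move=> n0 p0 q0 npq; have pq0 := mulr_ge0 p0 q0.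
rewrite -!sqrtrM ?mulr_ge0 //; apply/andP; split.
  by rewrite -{1}(ger0_norm n0) -sqrtr_sqr expr2 ler_sqrt ?mulr_ge0 // ler_wpM2r.
by rewrite -{2}(ger0_norm pq0) -sqrtr_sqr expr2 ler_sqrt ?mulr_ge0 // ler_wpM2l.
Qed.

Section SpectralRadiusBounds.
Context {R : realType} {H : completeNormedModType (C R)} {a : nat -> C R} {rho : R}.
Hypothesis a_cvg : forall z : C R, cmod z < rho -> cvgn (series (fun n => a n * z ^+ n)).

Lemma spec_radius_op_series_le_opnorm {P : H -> H} : bounded_op P -> opnorm P < rho ->
  spec_radius (op_series a P) <= abs_series a (opnorm P).
Proof.
move=> hP lt_rho; have P0 := opnorm_ge0 hP.
apply: (spec_radius_op_series_le a_cvg hP P0 lt_rho) => t st _.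
exact: geometric_growth_le P0 (ltW st) (opnorm_growth hP).
Qed.

Lemma spec_radius_op_series_comm_le {A B : H -> H} :
  bounded_op A -> bounded_op B -> (forall x, A (B x) = B (A x)) ->
  opnorm A * Num.sqrt (opnorm (B \o B)) < rho ->
  spec_radius (op_series a (A \o B)) <= abs_series a (opnorm A * Num.sqrt (opnorm (B \o B))).
Proof.
move=> hA hB AB lt_rho; have oa0 := opnorm_ge0 hA.
set q := Num.sqrt (opnorm (B \o B)); have q0 : 0 <= q := sqrtr_ge0 _.
apply: (spec_radius_op_series_le a_cvg (bop_comp hA hB) (mulr_ge0 oa0 q0) lt_rho) => t st _.
(* [u := q + k] satisfies [q < u] and [|A| u <= t]. *)
set k := (t - opnorm A * q) / (opnorm A + 1).
have k0 : 0 < k by rewrite divr_gt0 ?subr_gt0 // ltr_wpDl.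
have hk : (opnorm A + 1) * k = t - opnorm A * q by rewrite mulrC divfK // gt_eqF // ltr_wpDl.
have qk : q < q + k by rewrite ltrDl.
have growth := geometric_growth_comp_commute AB oa0 (opnorm_growth hA)
                 (sqrt_opnorm_sqr_growth hB qk).
by apply: geometric_growth_le growth; [rewrite mulr_ge0 // addr_ge0 // ltW | nra].
Qed.

Lemma spec_radius_op_series_le_min {A B : H -> H} :
  bounded_op A -> bounded_op B -> (forall x, A (B x) = B (A x)) ->
  opnorm A ^+ 2 < rho -> opnorm B ^+ 2 < rho ->
  spec_radius (op_series a (A \o B)) <=
    Num.min (abs_series a (opnorm A * Num.sqrt (opnorm (B \o B))))
            (abs_series a (Num.sqrt (opnorm (A \o A)) * opnorm B)).
Proof.
move=> hA hB AB nA nB; have ab_lt := mul_lt_of_sqr_lt (opnorm_ge0 hA) (opnorm_ge0 hB) nA nB.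
rewrite le_min; apply/andP; split.
  apply: spec_radius_op_series_comm_le => //.
  by apply: le_lt_trans ab_lt; rewrite ler_wpM2l ?opnorm_ge0 ?sqrt_opnorm_sqr_le.
have -> : A \o B = B \o A by apply: funext => x /=; rewrite AB.
rewrite [_ * opnorm B]mulrC.
apply: (spec_radius_op_series_comm_le hB hA (fun x => esym (AB x))).
by apply: le_lt_trans ab_lt; rewrite mulrC ler_wpM2r ?opnorm_ge0 ?sqrt_opnorm_sqr_le.
Qed.

Lemma min_abs_series_sqrt_opnorm_le {A B : H -> H} :
  bounded_op A -> bounded_op B -> opnorm A ^+ 2 < rho -> opnorm B ^+ 2 < rho ->
  Num.min (abs_series a (opnorm A * Num.sqrt (opnorm (B \o B))))
          (abs_series a (Num.sqrt (opnorm (A \o A)) * opnorm B)) <=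
  Num.min
    (Num.sqrt (abs_series a (opnorm A ^+ 2)) * Num.sqrt (abs_series a (opnorm (B \o B))))
    (Num.sqrt (abs_series a (opnorm (A \o A))) * Num.sqrt (abs_series a (opnorm B ^+ 2))).
Proof.
move=> hA hB nA nB; have [hAA hBB] := (bop_comp hA hA, bop_comp hB hB).
apply: le_min2.
  exact: abs_series_mul_sqrt_le (opnorm_ge0 hA) (opnorm_ge0 hBB) nA
           (le_lt_trans (opnorm_sqr_le hB) nB).
rewrite mulrC [leRHS]mulrC.
exact: abs_series_mul_sqrt_le (opnorm_ge0 hB) (opnorm_ge0 hAA) nB
         (le_lt_trans (opnorm_sqr_le hA) nA).
Qed.

End SpectralRadiusBounds.


Theorem proposition3p1 (R : realType) (H : completeNormedModType (C R))
  (ip : H -> H -> C R) (hip : is_inner_product ip)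
  (a : nat -> C R) (rho : R) (rho_gt0 : 0 < rho)
  (a_cvg : forall z : C R, cmod z < rho ->
     cvgn (series (fun n => a n * z ^+ n)))
  (A B : H -> H) (hA : bounded_op A) (hB : bounded_op B)
  (hAB : forall x, A (B x) = B (A x))
  (nA : opnorm A ^+ 2 < rho) (nB : opnorm B ^+ 2 < rho) :
  let r := spec_radius (op_series a (A \o B)) in
  let fa := abs_series a in
  let nAB := opnorm (A \o B) in
  [/\ r <= 2^-1 * fa nAB
           + 2^-1 * fa (Num.sqrt (opnorm A) * Num.sqrt (opnorm B) * Num.sqrt nAB),
      2^-1 * fa nAB
           + 2^-1 * fa (Num.sqrt (opnorm A) * Num.sqrt (opnorm B) * Num.sqrt nAB)
        <= 2^-1 * fa nAB
           + 2^-1 * (Num.sqrt (fa (opnorm A * opnorm B)) * Num.sqrt (fa nAB)),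
      r <= 2^-1 * fa nAB
           + 2^-1 * Num.min (fa (opnorm A * Num.sqrt (opnorm (B \o B))))
                            (fa (Num.sqrt (opnorm (A \o A)) * opnorm B)) &
      2^-1 * fa nAB
           + 2^-1 * Num.min (fa (opnorm A * Num.sqrt (opnorm (B \o B))))
                            (fa (Num.sqrt (opnorm (A \o A)) * opnorm B))
        <= 2^-1 * fa nAB
           + 2^-1 * Num.min
                (Num.sqrt (fa (opnorm A ^+ 2)) * Num.sqrt (fa (opnorm (B \o B))))
                (Num.sqrt (fa (opnorm (A \o A))) * Num.sqrt (fa (opnorm B ^+ 2)))].
Proof.
move=> r fa nAB; rewrite {}/fa.
have [oa0 ob0] := (opnorm_ge0 hA, opnorm_ge0 hB).
have nAB0 : 0 <= nAB := opnorm_ge0 (bop_comp hA hB).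
have ab_lt : opnorm A * opnorm B < rho := mul_lt_of_sqr_lt oa0 ob0 nA nB.
have nAB_le : nAB <= opnorm A * opnorm B := opnorm_comp_le hA hB.
have nAB_lt : nAB < rho := le_lt_trans nAB_le ab_lt.
have /andP[nAB_X X_le] := sqrt_mean_bounds nAB0 oa0 ob0 nAB_le.
have rAB : r <= abs_series a nAB.
  exact: (spec_radius_op_series_le_opnorm a_cvg (bop_comp hA hB) nAB_lt).
have rmin : r <= _ := spec_radius_op_series_le_min a_cvg hA hB hAB nA nB.
have faX := le_abs_series a_cvg nAB0 nAB_X (le_lt_trans X_le ab_lt).
have faX_le := @abs_series_mul_sqrt_le _ _ _ a_cvg
  (Num.sqrt (opnorm A) * Num.sqrt (opnorm B)) nAB.
rewrite exprMn !sqr_sqrtr // in faX_le.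
split; [lra | | lra |]; rewrite lerD2l ler_wpM2l ?invr_ge0 //.
  by rewrite faX_le ?mulr_ge0 ?sqrtr_ge0.
exact: (min_abs_series_sqrt_opnorm_le a_cvg hA hB nA nB).
Qed.
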